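(* Let $\mathcal{I}=(\mathcal{P},\mathcal{L})$ be a cyclic symmetric $(v,k)$-configuration with cyclic permutation $\sigma$. Fix a point $P_0$ and a block $\ell_0$, and put $P_i=\sigma^i(P_0)$, $\ell_i=\sigma^i(\ell_0)$ (indices modulo $v$). Let $d$ be a positive divisor of $v$, $t=v/d$, $O_i=\{P_u:u\equiv i\pmod t\}$, $L_i=\{\ell_u:u\equiv i\pmod t\}$ for $i=0,\dots,t-1$, and $w_u=|\ell_0\cap O_u|$. Let $V$ be the $v\times v$ incidence matrix of $\mathcal{I}$ whose rows are ordered as $\ell_0,\ell_t,\dots,\ell_{(d-1)t},\ell_1,\ell_{1+t},\dots,\ell_{t-1+(d-1)t}$ (i.e. $L_0$, then $L_1$, etc., each listed as $\ell_i,\ell_{i+t},\dots,\ell_{i+(d-1)t}$) and whose columns are ordered analogously as $P_0,P_t,\dots$ ($O_0$, then $O_1$, etc.). Then $V$ (which contains no $2\times2$ all-ones submatrix) is $d$-block circulant: writing $V=(C_{i,j})_{0\le i,j\le t-1}$ as a $t\times t$ block matrix of $d\times d$ blocks, each $C_{i,j}$ is a binary circulant $d\times d$ matrix with no $2\times 2$ all-ones submatrix and of weight $w_{j-i \bmod t}$. In particular the weight matrix $W(V)$ is the circulant $t\times t$ matrix whose $(i,j)$ entry is $w_{j-i\bmod t}$ (first row $w_0,w_1,\dots,w_{t-1}$, each subsequent row the cyclic right shift of the previous one).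
   Context: A symmetric $(v,k)$-configuration is a pair $(\mathcal{P},\mathcal{L})$ with $|\mathcal{P}|=|\mathcal{L}|=v$, blocks being subsets of $\mathcal{P}$, each block containing $k$ points, each point in $k$ blocks, any two points in at most one common block; it is cyclic if there is a permutation $\sigma$ of $\mathcal{P}$ mapping blocks to blocks with $\langle\sigma\rangle$ acting regularly on points and on blocks. The incidence matrix has rows indexed by blocks, columns by points, entry $1$ iff the point lies on the block. A square matrix is circulant if each row is obtained from the previous one by a cyclic shift one position to the right; its weight is the number of ones in each row. An $i\times j$ binary matrix is $d$-block circulant if it is partitioned into $d\times d$ blocks each of which is circulant; its weight matrix is the $(i/d)\times(j/d)$ matrix whose entries are the weights of these blocks. *)

From HB Require Import structures.
From mathcomp Require Import all_boot all_order all_algebra all_fingroup.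
Set Implicit Arguments. Unset Strict Implicit. Unset Printing Implicit Defensive.

Definition sym_config (T : finType) (L : {set {set T}}) (v k : nat) : Prop :=
  [/\ #|T| = v, #|L| = v,
      (forall B, B \in L -> #|B| = k),
      (forall x : T, #|[set B in L | x \in B]| = k) &
      (forall x y : T, x != y -> #|[set B in L | (x \in B) && (y \in B)]| <= 1)].

Definition cyclic_perm (T : finType) (L : {set {set T}}) (sigma : {perm T}) : Prop :=
  [/\ (forall B, B \in L -> sigma @: B \in L),
      (forall x y : T, exists! g : {perm T}, g \in <[sigma]>%g /\ g x = y) &
      (forall B C, B \in L -> C \in L ->
         exists! g : {perm T}, g \in <[sigma]>%g /\ g @: B = C)].

Definition pt (T : finType) (sigma : {perm T}) (P0 : T) (i : nat) : T :=
  (sigma ^+ i)%g P0.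
Definition blk (T : finType) (sigma : {perm T}) (l0 : {set T}) (i : nat) : {set T} :=
  (sigma ^+ i)%g @: l0.

Definition orbitO (T : finType) (sigma : {perm T}) (P0 : T) (v t i : nat) : {set T} :=
  [set pt sigma P0 u | u : 'I_v & u %% t == i %% t].

Definition wt (T : finType) (sigma : {perm T}) (P0 : T) (l0 : {set T}) (v t u : nat) : nat :=
  #|l0 :&: orbitO sigma P0 v t u|.

(* The incidence matrix with rows ordered l_0,l_t,..,l_{(d-1)t},l_1,... and
   columns P_0,P_t,..,P_{(d-1)t},P_1,...: row r = i*d + a (i<t, a<d) is the
   block l_{i+a t}, column c = j*d + b is the point P_{j + b t}. *)
Definition ordered_incidence (T : finType) (sigma : {perm T}) (P0 : T)
    (l0 : {set T}) (t d : nat) : 'M[bool]_(t * d) :=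
  \matrix_(r < t * d, c < t * d)
    (pt sigma P0 (c %/ d + (c %% d) * t) \in blk sigma l0 (r %/ d + (r %% d) * t)).

Definition is_circulant (n : nat) (C : 'M[bool]_n) : Prop :=
  forall i j : 'I_n, i.+1 < n -> C (ordS i) (ordS j) = C i j.

Definition row_weight (n : nat) (C : 'M[bool]_n) (w : nat) : Prop :=
  forall i : 'I_n, #|[set j | C i j]| = w.

Definition no_2x2_ones (m n : nat) (M : 'M[bool]_(m, n)) : Prop :=
  ~ exists (r1 r2 : 'I_m) (c1 c2 : 'I_n),
      [/\ r1 != r2, c1 != c2, M r1 c1 && M r1 c2 & M r2 c1 && M r2 c2].

Lemma blk_idx_proof (t d : nat) (i : 'I_t) (a : 'I_d) : i * d + a < t * d.
Proof.
case: i a => i Hi [a Ha] /=.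
apply: (@leq_trans (i * d + d)); first by rewrite ltn_add2l.
by rewrite -mulSnr leq_mul2r Hi orbT.
Qed.

Definition blk_idx (t d : nat) (i : 'I_t) (a : 'I_d) : 'I_(t * d) :=
  Ordinal (blk_idx_proof i a).

Definition block_of (t d : nat) (V : 'M[bool]_(t * d)) (i j : 'I_t) : 'M[bool]_d :=
  \matrix_(a < d, b < d) V (blk_idx i a) (blk_idx j b).

Definition block_circulant (t d : nat) (V : 'M[bool]_(t * d)) : Prop :=
  forall i j : 'I_t, is_circulant (block_of V i j).

(* weight matrix: entry (i,j) = weight of block C_{ij}, i.e. its number of
   ones divided by d (= the common row weight for a circulant block) *)
Definition weight_mx (t d : nat) (V : 'M[bool]_(t * d)) : 'M[nat]_t :=
  \matrix_(i < t, j < t)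
    (#|[set ab : 'I_d * 'I_d | block_of V i j ab.1 ab.2]| %/ d).

Definition circ_mx (t : nat) (f : nat -> nat) : 'M[nat]_t :=
  \matrix_(i < t, j < t) f ((j + t - i) %% t).

From HB Require Import structures.
From mathcomp Require Import all_boot all_order all_algebra all_fingroup.
From mathcomp Require Import cyclic zify.
Set Implicit Arguments. Unset Strict Implicit. Unset Printing Implicit Defensive.

(* The map i |-> sigma^i identifies both the points and the blocks with Z/vZ,
   and since sigma^s sends P_x to P_(x+s) and l_y to l_(y+s), whether P_x lies
   on l_y depends only on x - y mod v.  In the given orderings the (a, b)
   entry of the block (i, j) is [P_(j + b t) \in l_(i + a t)], which depends
   only on (j - i) + (b - a) t: each block is circulant, and its row a counts
   the points of l_0 among P_(j - i + b' t), b' ranging over all residues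
   mod d, i.e. |l_0 \cap O_(j - i)|.  Two rows sharing two ones would give two
   distinct points on two distinct blocks, which a configuration forbids. *)

Section CyclicPowers.

Variables (T : finType) (sigma : {perm T}).

Lemma expg_eq_mod_unique (P : {perm T} -> Prop) x y :
    (exists! g, g \in <[sigma]>%g /\ P g) ->
  P (sigma ^+ x)%g -> P (sigma ^+ y)%g -> x = y %[mod #[sigma]%g].
Proof.
case=> g [_ g_uniq] Px Py; apply/eqP; rewrite -eq_expg_mod_order; apply/eqP.
by rewrite -(g_uniq _ (conj (mem_cycle _ x) Px)) (g_uniq _ (conj (mem_cycle _ y) Py)).
Qed.

(* [P0] only witnesses that [T] is nonempty. *)
Lemma order_regular (P0 : T) :
  (forall x y : T, exists! g : {perm T}, g \in <[sigma]>%g /\ g x = y) ->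
  #[sigma]%g = #|T|.
Proof.
move=> regular; rewrite orderE.
have inj_at : {in <[sigma]>%g &, injective (fun g : {perm T} => g P0)}.
  move=> g h g_in h_in /= gh; have [g0 [_ g0_uniq]] := regular P0 (g P0).
  by rewrite -(g0_uniq g) ?(g0_uniq h).
rewrite -(card_in_imset inj_at); apply: eq_card => y; rewrite [RHS]inE.
apply/imsetP; by have [g [[g_in <-] _]] := regular P0 y; exists g.
Qed.

Lemma pt_mod_order P0 x : pt sigma P0 (x %% #[sigma]%g) = pt sigma P0 x.
Proof. by rewrite /pt expg_mod_order. Qed.

Lemma ptD P0 x s : pt sigma P0 (x + s) = (sigma ^+ s)%g (pt sigma P0 x).
Proof. by rewrite /pt expgD permM. Qed.

Lemma blk0 l0 : blk sigma l0 0 = l0.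
Proof. by rewrite /blk expg0 (eq_imset _ (@perm1 _)) imset_id. Qed.

Lemma blkD l0 y s : blk sigma l0 (y + s) = (sigma ^+ s)%g @: blk sigma l0 y.
Proof. by rewrite /blk -imset_comp; apply: eq_imset => z /=; rewrite expgD permM. Qed.

Lemma mem_pt_blk_shift P0 l0 x y s :
  (pt sigma P0 (x + s) \in blk sigma l0 (y + s)) = (pt sigma P0 x \in blk sigma l0 y).
Proof. by rewrite ptD blkD mem_imset //; apply: perm_inj. Qed.

Lemma mem_pt_blk_congr P0 l0 x y x' y' :
    x + y' = x' + y %[mod #[sigma]%g] ->
  (pt sigma P0 x \in blk sigma l0 y) = (pt sigma P0 x' \in blk sigma l0 y').
Proof.
move=> xy; rewrite -(mem_pt_blk_shift _ _ _ _ y') -[RHS](mem_pt_blk_shift _ _ _ _ y).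
by rewrite -pt_mod_order xy pt_mod_order [y' + y]addnC.
Qed.

Lemma pt_eq_mod_order P0 x y :
    (forall x y : T, exists! g : {perm T}, g \in <[sigma]>%g /\ g x = y) ->
  pt sigma P0 x = pt sigma P0 y -> x = y %[mod #[sigma]%g].
Proof.
move=> regular xy; exact: (expg_eq_mod_unique (regular P0 (pt sigma P0 x))).
Qed.

End CyclicPowers.

Section BlockOrbit.

Variables (T : finType) (L : {set {set T}}) (sigma : {perm T}) (l0 : {set T}).

Hypothesis sigma_cyclic : cyclic_perm L sigma.
Hypothesis l0L : l0 \in L.

Lemma blk_in_L y : blk sigma l0 y \in L.
Proof.
have [sigma_stable _ _] := sigma_cyclic.
elim: y => [|y IHy]; first by rewrite blk0.
by rewrite -addn1 blkD expg1 sigma_stable.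
Qed.

Lemma blk_eq_mod_order x y :
  blk sigma l0 x = blk sigma l0 y -> x = y %[mod #[sigma]%g].
Proof.
have [_ _ regular_blocks] := sigma_cyclic.
move=> xy; exact: (expg_eq_mod_unique (regular_blocks _ _ l0L (blk_in_L x))).
Qed.

End BlockOrbit.

Section BlockMatrices.

Variables t d : nat.

Lemma blk_idx_inj (i : 'I_t) : injective (@blk_idx t d i).
Proof. by move=> a b /(congr1 val) /addnI; apply: val_inj. Qed.

Lemma no_2x2_ones_block_of (V : 'M[bool]_(t * d)) i j :
  no_2x2_ones V -> no_2x2_ones (block_of V i j).
Proof.
move=> noV [a1 [a2 [b1 [b2 [a12 b12]]]]]; rewrite !mxE => V1 V2; apply: noV.
exists (blk_idx i a1), (blk_idx i a2), (blk_idx j b1), (blk_idx j b2).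
by rewrite !(inj_eq (@blk_idx_inj _)).
Qed.

Lemma card_ones_row_weight (n : nat) (C : 'M[bool]_n) w :
  row_weight C w -> #|[set ab : 'I_n * 'I_n | C ab.1 ab.2]| = n * w.
Proof.
move=> rowC; rewrite -sum1_card (eq_bigl _ _ (fun ab => in_set _ _)) /=.
rewrite -(pair_big_dep xpredT (fun a b => C a b) (fun _ _ => 1)) /=.
rewrite -[n in RHS]card_ord -sum_nat_const; apply: eq_bigr => a _.
by rewrite sum1dep_card -(rowC a) cardsE.
Qed.

Lemma weight_mx_row_weight (V : 'M[bool]_(t * d)) (f : 'I_t -> 'I_t -> nat) :
    0 < d -> (forall i j, row_weight (block_of V i j) (f i j)) ->
  weight_mx V = (\matrix_(i, j) f i j)%R.
Proof.
move=> d_gt0 rowV; apply/matrixP => i j.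
by rewrite !mxE (card_ones_row_weight (rowV i j)) mulKn.
Qed.

End BlockMatrices.

Lemma no_2x2_ones_incidence (T : finType) (L : {set {set T}}) m n
    (B : 'I_m -> {set T}) (P : 'I_n -> T) :
    (forall x y : T, x != y -> #|[set C in L | (x \in C) && (y \in C)]| <= 1) ->
    (forall r, B r \in L) -> injective B -> injective P ->
  no_2x2_ones (\matrix_(r, c) (P c \in B r))%R.
Proof.
move=> lin BL Binj Pinj [r1 [r2 [c1 [c2 [r12 c12]]]]].
rewrite !mxE => /andP [P1B1 P2B1] /andP [P1B2 P2B2].
have := lin (P c1) (P c2); rewrite inj_eq // leqNgt => /(_ c12) /negP; apply.
have -> : 2 = #|[set B r1; B r2]| by rewrite cards2 (inj_eq Binj) r12.
apply: subset_leq_card; apply/subsetP => C.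
by rewrite !inE => /orP [] /eqP ->; rewrite ?BL ?P1B1 ?P2B1 ?P1B2 ?P2B2.
Qed.

Lemma card_shift_periodic t d c K (g : nat -> bool) :
    0 < d -> (forall m, g (m %% (t * d)) = g m) ->
  #|[set b : 'I_d | g (c + (b + K) * t)]| = #|[set b : 'I_d | g (c + b * t)]|.
Proof.
move=> d_gt0 g_periodic.
pose rot (b : 'I_d) : 'I_d := Ordinal (ltn_pmod (b + K) d_gt0).
have rot_inj : injective rot.
  move=> b b' /(congr1 val) /= /eqP; rewrite eqn_modDr !modn_small // => /eqP bb'.
  exact: val_inj.
rewrite -[RHS](card_preimset _ rot_inj); apply: eq_card => b; rewrite !inE /=.
by rewrite -g_periodic -[RHS]g_periodic (mulnC t d) muln_modl modnDmr.
Qed.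

(* Row [r = i * d + a] of [ordered_incidence] is the block [l_(i + a t)], and
   likewise for columns. *)
Definition shuffle_idx (t d r : nat) : nat := r %/ d + r %% d * t.

Section ShuffleIndex.

Variables t d : nat.

Lemma shuffle_idx_blk_idx (i : 'I_t) (a : 'I_d) :
  shuffle_idx t d (blk_idx i a) = i + a * t.
Proof.
have d_gt0 : 0 < d := leq_ltn_trans (leq0n a) (ltn_ord a).
by rewrite /shuffle_idx /= divnMDl // modnMDl divn_small // modn_small // addn0.
Qed.

Lemma shuffle_idx_lt (r : 'I_(t * d)) : shuffle_idx t d r < t * d.
Proof.
have [t_gt0 d_gt0] : 0 < t /\ 0 < d.
  by apply/andP; rewrite -muln_gt0 (leq_ltn_trans (leq0n r) (ltn_ord r)).
have r_div : r %/ d < t by rewrite ltn_divLR.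
have r_mod : r %% d < d by rewrite ltn_pmod.
rewrite /shuffle_idx; nia.
Qed.

Lemma shuffle_idx_inj_mod (r r' : 'I_(t * d)) :
  shuffle_idx t d r = shuffle_idx t d r' %[mod t * d] -> r = r'.
Proof.
have [t_gt0 d_gt0] : 0 < t /\ 0 < d.
  by apply/andP; rewrite -muln_gt0 (leq_ltn_trans (leq0n r) (ltn_ord r)).
rewrite !modn_small ?shuffle_idx_lt // /shuffle_idx => rr'.
have r_div : r %/ d < t by rewrite ltn_divLR.
have r'_div : r' %/ d < t by rewrite ltn_divLR.
have div_eq : r %/ d = r' %/ d.
  by move: (congr1 (modn^~ t) rr'); rewrite /= !(addnC (_ %/ d)) !modnMDl !modn_small.
move: rr'; rewrite div_eq => /addnI/eqP; rewrite eqn_pmul2r // => /eqP mod_eq.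
by apply: val_inj; rewrite /= (divn_eq r d) (divn_eq r' d) div_eq mod_eq.
Qed.

End ShuffleIndex.

Lemma block_of_ordered_incidence (T : finType) (sigma : {perm T}) P0 l0 t d
    (i j : 'I_t) (a b : 'I_d) :
  block_of (ordered_incidence sigma P0 l0 t d) i j a b =
  (pt sigma P0 (j + b * t) \in blk sigma l0 (i + a * t)).
Proof. by rewrite !mxE -!/(shuffle_idx _ _ _) !shuffle_idx_blk_idx. Qed.

Section OrderedIncidence.

Variables (T : finType) (sigma : {perm T}) (P0 : T) (l0 : {set T}) (v t d : nat).

Hypothesis sigma_regular :
  forall x y : T, exists! g : {perm T}, g \in <[sigma]>%g /\ g x = y.
Hypothesis order_sigma : #[sigma]%g = v.
Hypothesis tdv : t * d = v.

Let V := ordered_incidence sigma P0 l0 t d.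

Lemma ordered_incidence_block_circulant : block_circulant V.
Proof.
move=> i j a b a_lt; rewrite !block_of_ordered_incidence.
apply: mem_pt_blk_congr; rewrite order_sigma -tdv /= (modn_small a_lt).
rewrite (mulnC t d) muln_modl -modnDml modnDmr modnDml; congr (_ %% _); lia.
Qed.

Lemma wt_card_orbit c : c < t ->
  wt sigma P0 l0 v t c = #|[set b : 'I_d | pt sigma P0 (c + b * t) \in l0]|.
Proof.
move=> c_lt; have t_gt0 : 0 < t := leq_ltn_trans (leq0n c) c_lt.
have idx_lt (b : 'I_d) : c + b * t < v by rewrite -tdv; have := ltn_ord b; nia.
pose f (b : 'I_d) := pt sigma P0 (c + b * t).
have f_inj : injective f.
  move=> b b' /(pt_eq_mod_order sigma_regular); rewrite order_sigma !modn_small //.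
  move=> /addnI/eqP.
  by rewrite eqn_pmul2r // => /eqP; apply: val_inj.
rewrite /wt -(card_imset _ f_inj); apply: eq_card => x; rewrite !inE.
apply/andP/imsetP => [[x_l0 /imsetP [u]] | [b]].
- rewrite inE (modn_small c_lt) => /eqP u_mod x_eq.
  have u_div : u %/ t < d by rewrite ltn_divLR // mulnC tdv.
  have u_eq : c + u %/ t * t = u by rewrite -u_mod addnC -divn_eq.
  by exists (Ordinal u_div); rewrite ?inE /f /= u_eq -?x_eq.
- rewrite inE => fb_l0 ->; split => //; apply/imsetP.
  by exists (Ordinal (idx_lt b)); rewrite // inE /= addnC modnMDl.
Qed.

Lemma ordered_incidence_row_weight (i j : 'I_t) :
  row_weight (block_of V i j) (wt sigma P0 l0 v t ((j + t - i) %% t)).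
Proof.
move=> a; have t_gt0 : 0 < t := leq_ltn_trans (leq0n i) (ltn_ord i).
have d_gt0 : 0 < d := leq_ltn_trans (leq0n a) (ltn_ord a).
set c := (j + t - i) %% t; set K := d - 1 - a + (j + t - i) %/ t.
rewrite wt_card_orbit ?ltn_pmod //.
rewrite -(@card_shift_periodic t d c K (fun m => pt sigma P0 m \in l0)) //; last first.
  by move=> m; rewrite tdv -order_sigma pt_mod_order.
apply: eq_card => b; rewrite !inE block_of_ordered_incidence -[in RHS](blk0 sigma l0).
apply: mem_pt_blk_congr; rewrite order_sigma -tdv.
have -> : c + (b + K) * t + (i + a * t) = j + b * t + 0 + t * d.
  have := divn_eq (j + t - i) t; rewrite -/c /K; have := ltn_ord i; have := ltn_ord a; nia.
by rewrite modnDr.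
Qed.

End OrderedIncidence.

Lemma ordered_incidence_no_2x2_ones (T : finType) (L : {set {set T}})
    (sigma : {perm T}) P0 l0 t d :
    cyclic_perm L sigma -> l0 \in L -> #[sigma]%g = t * d ->
    (forall x y : T, x != y -> #|[set B in L | (x \in B) && (y \in B)]| <= 1) ->
  no_2x2_ones (ordered_incidence sigma P0 l0 t d).
Proof.
move=> sigma_cyclic l0L order_sigma lin.
apply: (no_2x2_ones_incidence lin (fun r => blk_in_L sigma_cyclic l0L _)).
- move=> r r' /(blk_eq_mod_order sigma_cyclic l0L).
  by rewrite order_sigma => /shuffle_idx_inj_mod.
- have [_ regular _] := sigma_cyclic.
  by move=> c c' /(pt_eq_mod_order regular); rewrite order_sigma => /shuffle_idx_inj_mod.
Qed.

Theorem corollary1 (T : finType) (L : {set {set T}}) (v k : nat)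
    (sigma : {perm T}) (P0 : T) (l0 : {set T}) (d : nat) :
  sym_config L v k ->
  cyclic_perm L sigma ->
  l0 \in L ->
  0 < d -> d %| v ->
  let t := v %/ d in
  let V := ordered_incidence sigma P0 l0 t d in
  let w := wt sigma P0 l0 v t in
  [/\ no_2x2_ones V,
      block_circulant V,
      (forall i j : 'I_t,
          [/\ is_circulant (block_of V i j),
              no_2x2_ones (block_of V i j) &
              row_weight (block_of V i j) (w ((j + t - i) %% t))]) &
      weight_mx V = circ_mx t w].
Proof.
move=> [cardT _ _ _ lin] sigma_cyclic l0L d_gt0 d_dvd t V w.
have [_ regular _] := sigma_cyclic.
have tdv : t * d = v by rewrite divnK.
have order_sigma : #[sigma]%g = v by rewrite (order_regular P0 regular) cardT.
have noV : no_2x2_ones V.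
  have order_td : #[sigma]%g = t * d by rewrite tdv.
  exact: ordered_incidence_no_2x2_ones sigma_cyclic l0L order_td lin.
have circV := ordered_incidence_block_circulant P0 l0 order_sigma tdv.
have rowV := ordered_incidence_row_weight P0 l0 regular order_sigma tdv.
split=> // [i j|]; first by split; [apply: circV | apply: no_2x2_ones_block_of | apply: rowV].
exact: weight_mx_row_weight.
Qed.
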